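(* Let $\Psi$ be a performance metric whose representation $\Psi(\mathbf{s},\mathbf{y})=\Phi(\widehat{TP}(\mathbf{s},\mathbf{y}),v(\mathbf{s}),p(\mathbf{y}))$ is such that $\Phi(\cdot,v,p)$ does not depend on its first argument. Then $\Psi$ satisfies the probability ranking principle, in the sense that for any set $\mathbf{x}$ of $n$ instances and any conditional label distribution $\mathbb{P}(\mathbf{y}\mid\mathbf{x})=\prod_{i=1}^n\eta_i^{y_i}(1-\eta_i)^{1-y_i}$, there is a maximizer $\mathbf{s}^*$ of $U_\Psi(\cdot;\mathbb{P})$ over $\{0,1\}^n$ with $\min\{\eta_i:s^*_i=1\}\ge\max\{\eta_i:s^*_i=0\}$.
   Context: Labels are binary. For predictions $\mathbf{s}\in\{0,1\}^n$ and labels $\mathbf{y}\in\{0,1\}^n$, $\widehat{TP}(\mathbf{s},\mathbf{y})=\frac1n\sum_i s_iy_i$, $v(\mathbf{s})=\frac1n\sum_i s_i$, $p(\mathbf{y})=\frac1n\sum_i y_i$; a metric $\Psi$ is a function of the empirical confusion matrix (true/false positive/negative rates), equivalently a function $\Phi(\widehat{TP},v,p)$. $\eta_i=\mathbb{P}(Y=1\mid x_i)$, and $U_\Psi(\mathbf{s};\mathbb{P})=\mathbb{E}_{\mathbf{y}\sim\mathbb{P}(\cdot\mid\mathbf{x})}\Psi(\mathbf{s},\mathbf{y})$. *)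

From mathcomp Require Import all_boot all_order all_algebra.
Set Implicit Arguments. Unset Strict Implicit. Unset Printing Implicit Defensive.
Import Order.TTheory GRing.Theory Num.Theory.
Local Open Scope ring_scope.

Section Metric.
Variables (R : realFieldType) (n : nat).

Definition TPhat (s y : {ffun 'I_n -> bool}) : R :=
  n%:R^-1 * \sum_(i < n) ((s i && y i)%:R).
Definition vrate (s : {ffun 'I_n -> bool}) : R :=
  n%:R^-1 * \sum_(i < n) ((s i)%:R).
Definition prate (y : {ffun 'I_n -> bool}) : R :=
  n%:R^-1 * \sum_(i < n) ((y i)%:R).

Definition Psi_of (Phi : R -> R -> R -> R) (s y : {ffun 'I_n -> bool}) : R :=
  Phi (TPhat s y) (vrate s) (prate y).

Definition label_prob (eta : 'I_n -> R) (y : {ffun 'I_n -> bool}) : R :=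
  \prod_(i < n) (if y i then eta i else 1 - eta i).

Definition U_Psi (Phi : R -> R -> R -> R) (eta : 'I_n -> R)
    (s : {ffun 'I_n -> bool}) : R :=
  \sum_(y : {ffun 'I_n -> bool}) label_prob eta y * Psi_of Phi s y.
End Metric.

From mathcomp Require Import all_boot all_order all_algebra.
Import Order.TTheory GRing.Theory Num.Theory.
Local Open Scope ring_scope.

(** Since [Phi] ignores the true-positive rate, the expected utility of [s]
    depends on [s] only through the number of predicted positives.  Among the
    maximizers pick one whose total score [\sum_i s_i eta_i] is maximal: if it
    predicted [i] positive and [j] negative with [eta_i < eta_j], exchanging the
    two labels would keep the number of positives, hence stay a maximizer,
    while strictly increasing the score. *)

Lemma exists_argmax_lex {d d' : Order.disp_t} {T : finType}
    {A : orderType d} {B : orderType d'} (f : T -> A) (g : T -> B) (x0 : T) :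
  exists x, (forall y, f y <= f x)%O /\
            (forall y, (f x <= f y)%O -> (g y <= g x)%O).
Proof.
have [m _ f_max] := @arg_maxP _ _ _ x0 xpredT f isT.
have [x f_mx g_max] := @arg_maxP _ _ _ m (fun y => f m <= f y)%O g (lexx _).
exists x; split=> [y|y f_xy]; first exact: le_trans (f_max y isT) f_mx.
by apply: g_max; apply: le_trans f_mx f_xy.
Qed.

Definition exchange {n} (s : {ffun 'I_n -> bool}) (i j : 'I_n) :
    {ffun 'I_n -> bool} :=
  [ffun k => if k == i then false else if k == j then true else s k].

Lemma sum_exchange (R : pzRingType) n (s : {ffun 'I_n -> bool}) (i j : 'I_n)
    (f : 'I_n -> R) :
  s i -> ~~ s j ->
  \sum_(k < n) (exchange s i j k)%:R * f k + f i =
  \sum_(k < n) (s k)%:R * f k + f j.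
Proof.
move=> si sj; have ij : i != j by apply: contraNneq sj => <-.
rewrite (bigD1 i) // [in RHS](bigD1 i) //= (bigD1 j) 1?eq_sym //=.
rewrite [in RHS](bigD1 j) 1?eq_sym //=.
rewrite !ffunE eqxx eq_sym (negbTE ij) eqxx si (negbTE sj) /=.
under eq_bigr => k /andP[ki kj] do rewrite ffunE (negbTE ki) (negbTE kj).
by rewrite !(mul0r, mul1r, add0r) addrAC [RHS]addrAC (addrC (f j)).
Qed.

Lemma vrate_exchange (R : realFieldType) n (s : {ffun 'I_n -> bool})
    (i j : 'I_n) :
  s i -> ~~ s j -> vrate R (exchange s i j) = vrate R s.
Proof.
move=> si sj; rewrite /vrate; congr (_ * _).
have := @sum_exchange R n s i j (fun _ => 1) si sj.
under eq_bigr do rewrite mulr1.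
by under [X in _ = X + _ -> _]eq_bigr do rewrite mulr1; apply: addIr.
Qed.

Lemma U_Psi_vrate (R : realFieldType) (Phi : R -> R -> R -> R)
    (hPhi : forall t t' v p : R, Phi t v p = Phi t' v p)
    n (eta : 'I_n -> R) (s s' : {ffun 'I_n -> bool}) :
  vrate R s = vrate R s' -> U_Psi Phi eta s = U_Psi Phi eta s'.
Proof.
move=> vss'; apply: eq_bigr => y _; congr (_ * _).
by rewrite /Psi_of vss' (hPhi _ (TPhat R s' y)).
Qed.

Theorem proposition2 (R : realFieldType) (Phi : R -> R -> R -> R)
  (hPhi : forall (t t' v p : R), Phi t v p = Phi t' v p)
  (n : nat) (eta : 'I_n -> R)
  (heta : forall i, 0 <= eta i <= 1) :
  exists sstar : {ffun 'I_n -> bool},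
    (forall s : {ffun 'I_n -> bool}, U_Psi Phi eta s <= U_Psi Phi eta sstar) /\
    (forall i j : 'I_n, sstar i -> ~~ sstar j -> eta j <= eta i).
Proof.
pose score (s : {ffun 'I_n -> bool}) := \sum_(k < n) (s k)%:R * eta k.
have [sstar [U_max score_max]] :=
  exists_argmax_lex (U_Psi Phi eta) score [ffun=> false].
exists sstar; split=> // i j si sj.
have U_swap : U_Psi Phi eta (exchange sstar i j) = U_Psi Phi eta sstar.
  exact/U_Psi_vrate/vrate_exchange.
have := score_max (exchange sstar i j); rewrite U_swap lexx => /(_ isT).
by rewrite -(lerD2r (eta i)) sum_exchange // lerD2l.
Qed.
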